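(* Let $G_n=([n],E_n)$ be any finite undirected graph without isolated vertices, with degree vector $\boldsymbol{d}=(d_i)_{i\in[n]}$, and let $c\in(0,1)$. Let $\boldsymbol{R}=(R_i)_{i\in[n]}$ be the graph-normalized PageRank vector of $G_n$ with damping factor $c$. Then $$R_i\le d_i\qquad\text{for all } i\in[n].$$
   Context: $\boldsymbol{A}=(a_{ij})_{i,j\in[n]}\in\{0,1\}^{n\times n}$ is the (symmetric) adjacency matrix of $G_n$ and $d_i=\sum_j a_{ij}\ge 1$. Define the row-stochastic matrix $\boldsymbol{P}=(p_{ij})$ by $p_{ij}=a_{ij}/d_i$. The graph-normalized PageRank vector with damping factor $c\in(0,1)$ is the unique (row) vector $\boldsymbol{R}\in[0,n]^n$ solving $\boldsymbol{R}=c\,\boldsymbol{R}\boldsymbol{P}+(1-c)\boldsymbol{1}_n$, where $\boldsymbol{1}_n$ is the all-ones vector; equivalently $R_k=(1-c)\sum_{s=0}^\infty c^s\sum_{j=1}^n(\boldsymbol{P}^s)_{jk}$. *)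

From mathcomp Require Import all_boot all_order all_algebra.
Set Implicit Arguments. Unset Strict Implicit. Unset Printing Implicit Defensive.
Import Order.TTheory GRing.Theory Num.Theory.
Local Open Scope ring_scope.

Definition degree {R : realFieldType} {n : nat} (A : 'M[R]_n) (i : 'I_n) : R :=
  \sum_(j < n) A i j.

Definition transP {R : realFieldType} {n : nat} (A : 'M[R]_n) : 'M[R]_n :=
  \matrix_(i, j) (A i j / degree A i).

Definition adjacency {R : realFieldType} {n : nat} (A : 'M[R]_n) : Prop :=
  (forall i j, A i j = 0 \/ A i j = 1) /\ (forall i j, A i j = A j i).

Definition is_pagerank {R : realFieldType} {n : nat} (A : 'M[R]_n) (c : R)
  (Rv : 'rV[R]_n) : Prop :=
  Rv = c *: (Rv *m transP A) + (1 - c) *: const_mx 1.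

From mathcomp Require Import all_boot all_order all_algebra.
From mathcomp Require Import lra.

Set Implicit Arguments.
Unset Strict Implicit.
Unset Printing Implicit Defensive.
Import Order.TTheory GRing.Theory Num.Theory.
Local Open Scope ring_scope.

(* Put x_k := R_k / d_k, so that R_k = c * sum_j x_j a_jk + (1 - c).  At a
   vertex m maximising x, symmetry gives sum_j a_jm = d_m, hence
   x_m d_m <= c x_m d_m + (1 - c), i.e. x_m d_m <= 1, and x_m <= 1 since
   d_m >= 1.  Thus R_i = x_i d_i <= x_m d_i <= d_i. *)

Lemma pagerank_entryE (R : realFieldType) (n : nat) (A : 'M[R]_n) (c : R)
    (Rv : 'rV[R]_n) :
  is_pagerank A c Rv ->
  forall k, Rv 0 k = c * \sum_j Rv 0 j / degree A j * A j k + (1 - c).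
Proof.
move=> HP k; rewrite {1}HP !mxE mulr1; congr (_ * _ + _).
by apply: eq_bigr => j _; rewrite mxE mulrA mulrAC.
Qed.

Section PageRankRatio.

Variables (R : realFieldType) (n : nat) (A : 'M[R]_n).
Hypothesis A_ge0 : forall i j, 0 <= A i j.
Hypothesis A_sym : forall i j, A i j = A j i.

Lemma sum_mul_col_le_degree (w : 'I_n -> R) (M : R) k :
  (forall j, w j <= M) -> \sum_j w j * A j k <= M * degree A k.
Proof.
move=> w_le; rewrite /degree mulr_sumr; apply: ler_sum => j _.
by rewrite A_sym [w j * _]mulrC [M * _]mulrC ler_wpM2l.
Qed.

Hypothesis degree_ge1 : forall i, 1 <= degree A i.

Lemma pagerank_div_degree_le1 (c : R) (Rv : 'rV[R]_n) :
  0 <= c -> c < 1 -> is_pagerank A c Rv ->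
  forall k, Rv 0 k / degree A k <= 1.
Proof.
move=> c_ge0 c_lt1 HP k.
have d_neq0 j : degree A j != 0 by rewrite gt_eqF // (lt_le_trans ltr01).
pose x j := Rv 0 j / degree A j.
have [m _ x_le] := @arg_maxP _ _ 'I_n k xpredT x isT.
have Rm : Rv 0 m = x m * degree A m by rewrite /x divfK.
have Rm_le : x m * degree A m <= c * (x m * degree A m) + (1 - c).
  rewrite -Rm {1}(pagerank_entryE HP m) lerD2r ler_wpM2l // Rm.
  exact: sum_mul_col_le_degree (fun j => x_le j isT).
have xd_le1 : x m * degree A m <= 1 by nra.
have xm_le1 : x m <= 1 by have := degree_ge1 m; nra.
exact: le_trans (x_le k isT) xm_le1.
Qed.

End PageRankRatio.

Theorem mainTheorem1 (R : realFieldType) (n : nat) (A : 'M[R]_n) (c : R)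
  (Rv : 'rV[R]_n) :
  adjacency A ->
  (forall i, 1 <= degree A i) ->
  0 < c -> c < 1 ->
  is_pagerank A c Rv ->
  forall i : 'I_n, Rv 0 i <= degree A i.
Proof.
move=> [A01 A_sym] d_ge1 c_gt0 c_lt1 HP i.
have A_ge0 k l : 0 <= A k l by case: (A01 k l) => ->; rewrite ?ler01.
have d_gt0 : 0 < degree A i by apply: lt_le_trans (d_ge1 i).
rewrite -(divfK (lt0r_neq0 d_gt0) (Rv 0 i)) ger_pMl //.
exact: (pagerank_div_degree_le1 A_ge0 A_sym d_ge1 (ltW c_gt0) c_lt1 HP i).
Qed.
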